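(* For every integer $n>0$, the Hochschild lattice $\mathrm{Hoch}(n)$ has order dimension $n$.
   Context: For a finite directed graph $G$ without multiple edges, a maximal orthogonal pair is a pair $(X,Y)$ of disjoint subsets of the vertex set with no edge from a vertex of $X$ to a vertex of $Y$, maximal (under componentwise inclusion) for this property; these pairs ordered by $(X,Y)\le(X',Y')$ iff $X\subseteq X'$ form a lattice $L(G)$. $\mathrm{Hoch}(n):=L(G_n)$, where $G_n$ has vertices $\{(i,j)\mid i\in\{1,2\},\ i\le j\le n\}$ and edges $(i,j)\to(i',j')$ for $(i,j)\ne(i',j')$ whenever either $i=2$, $i'=1$, $j=j'$, or $i=i'=1$ and $j>j'$ (equivalently, $\mathrm{Hoch}(n)$ is the extremal lattice whose Galois graph is $G_n$). The order dimension of a poset $P$ is the least $d$ such that $P$ embeds as a subposet of $\mathbb R^d$ with the componentwise order. *)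

From Stdlib Require Import Reals.
From mathcomp Require Import all_boot.
Set Implicit Arguments. Unset Strict Implicit. Unset Printing Implicit Defensive.

Section Galois.
Variables (V : finType) (e : rel V).

Definition orth_pair (p : {set V} * {set V}) : bool :=
  [disjoint p.1 & p.2] && [forall x in p.1, forall y in p.2, ~~ e x y].

Definition max_orth_pair (p : {set V} * {set V}) : bool :=
  orth_pair p &&
  [forall q : {set V} * {set V},
     [&& orth_pair q, p.1 \subset q.1 & p.2 \subset q.2] ==> (q == p)].

Definition Lcarrier : Type := {p : {set V} * {set V} | max_orth_pair p}.

Definition Lle (p q : Lcarrier) : bool := (val p).1 \subset (val q).1.
End Galois.

(* vertices (i,j) with i in {1,2}, i <= j <= n; encoded in 'I_3 * 'I_n.+1 *)
Definition Gvert (n : nat) : Type :=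
  {v : 'I_3 * 'I_n.+1 | (0 < v.1) && (v.1 <= v.2)}.

Definition Gedge (n : nat) : rel (Gvert n) := fun u v =>
  let i := nat_of_ord (val u).1 in let j := nat_of_ord (val u).2 in
  let i' := nat_of_ord (val v).1 in let j' := nat_of_ord (val v).2 in
  [&& i == 2, i' == 1 & j == j'] || [&& i == 1, i' == 1 & j' < j].

Definition Hoch (n : nat) : Type := Lcarrier (@Gedge n).
Definition Hoch_le (n : nat) : rel (Hoch n) := @Lle _ (@Gedge n).

Definition embeds_in_Rd (T : Type) (le : rel T) (d : nat) : Prop :=
  exists f : T -> 'I_d -> R,
    (forall x y, f x = f y -> x = y) /\
    (forall x y, le x y <-> (forall k : 'I_d, Rle (f x k) (f y k))).

Definition order_dimension (T : Type) (le : rel T) (d : nat) : Prop :=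
  embeds_in_Rd le d /\ (forall d', embeds_in_Rd le d' -> d <= d').

From Stdlib Require Import Reals Lra.
From mathcomp Require Import all_boot zify.
Set Implicit Arguments. Unset Strict Implicit. Unset Printing Implicit Defensive.

(* A maximal orthogonal pair (X, Y) of G_n is determined by X.  Because of the
   edges (1,j) -> (1,j') for j' < j, X meets the first row in an initial
   segment, while its trace on the second row is unconstrained; the length of
   that segment together with the indicators of the (2,j), 2 <= j <= n,
   order-embeds Hoch(n) into N^n, hence into R^n.  Conversely Hoch(n) contains
   the standard example of dimension n: elements P_i, Q_i (i < n) with
   P_i not below Q_i but P_i <= Q_j for i <> j.  In an embedding each i needs a
   coordinate where Q_i < P_i, and no coordinate can serve two indices. *)


Lemma embeds_in_Rd_nat (T : Type) (le : rel T) (d : nat) (f : T -> 'I_d -> nat) :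
  antisymmetric le -> (forall x y, le x y <-> forall k, f x k <= f y k) ->
  embeds_in_Rd le d.
Proof.
move=> le_anti fP; exists (fun x k => INR (f x k)); split => [x y fxy | x y].
  have f_eq k : f x k = f y k by apply: INR_eq; exact: (congr1 (@^~ k) fxy).
  by apply: le_anti; apply/andP; split; apply/fP => k; rewrite f_eq.
rewrite fP; split=> le_xy k; [apply/le_INR/leP | apply/leP/INR_le]; exact: le_xy.
Qed.

Lemma standard_example_le_dim (T : Type) (le : rel T) (m d : nat) (P Q : 'I_m -> T) :
  (forall i, ~ le (P i) (Q i)) -> (forall i j, i != j -> le (P i) (Q j)) ->
  embeds_in_Rd le d -> m <= d.
Proof.
move=> PQ_nle PQ_le [f [_ fP]].
have witness i : exists k : 'I_d, (Rlt_dec (f (Q i) k) (f (P i) k) : bool).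
  apply/existsP; apply: contraT; rewrite negb_exists => /forallP none.
  exfalso; apply: (PQ_nle i); apply/fP => k.
  by move: (none k); case: Rlt_dec => // lt_QP _; apply: Rnot_lt_le.
pose g i := xchoose (witness i).
have gP i : Rlt (f (Q i) (g i)) (f (P i) (g i)).
  by move: (xchooseP (witness i)); case: Rlt_dec.
suff /leq_card : injective g by rewrite !card_ord.
(* g i = g j = k would give P j <= Q i < P i <= Q j < P j at coordinate k. *)
move=> i j gij; case: (eqVneq i j) => // ij; exfalso.
have ji : j != i by rewrite eq_sym.
have := gP i; have := gP j; rewrite gij.
have := (fP _ _).1 (PQ_le _ _ ij) (g j); have := (fP _ _).1 (PQ_le _ _ ji) (g j).
lra.
Qed.

Section OrthogonalPairs.
Variables (V : finType) (e : rel V).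
Implicit Types (p : {set V} * {set V}) (v : V).

Lemma orth_pairP p :
  reflect ((forall x, x \in p.1 -> x \notin p.2) /\
           (forall x y, x \in p.1 -> y \in p.2 -> ~~ e x y))
          (orth_pair e p).
Proof.
apply: (iffP andP) => [[disj /forall_inP noedge] | [disj noedge]]; split.
- by move=> x /(disjointFr disj) ->.
- by move=> x y /noedge /forall_inP; apply.
- by rewrite disjoints_subset; apply/subsetP => x /disj; rewrite inE.
- by apply/forall_inP => x /noedge noedge_x; apply/forall_inP.
Qed.

Lemma max_orth_pairW p : max_orth_pair e p -> orth_pair e p.
Proof. by case/andP. Qed.

Lemma max_orth_pair_of_saturated p :
  orth_pair e p ->
  (forall v, v \notin p.1 -> v \notin p.2 ->
     (exists2 x, x \in p.1 & e x v) /\ (exists2 y, y \in p.2 & e v y)) ->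
  max_orth_pair e p.
Proof.
case: p => X Y /= oXY saturated; rewrite /max_orth_pair oXY /=.
apply/forallP => -[X' Y'] /=; apply/implyP => /and3P [/orth_pairP [disj' noedge'] sXX' sYY'].
have sX'X : X' \subset X.
  apply/subsetP => v vX'; apply: contraT => vX.
  have vY : v \notin Y by apply: contraNN (disj' v vX') => /(subsetP sYY').
  have [_ [y yY evy]] := saturated v vX vY.
  by move: (noedge' v y vX' (subsetP sYY' y yY)); rewrite evy.
have sY'Y : Y' \subset Y.
  apply/subsetP => v vY'; apply: contraT => vY.
  have vX : v \notin X by apply: contraL vY' => /(subsetP sXX') /disj'.
  have [[x xX exv] _] := saturated v vX vY.
  by move: (noedge' x v (subsetP sXX' x xX) vY'); rewrite exv.
by rewrite xpair_eqE !eqEsubset sXX' sX'X sYY' sY'Y.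
Qed.

Lemma max_orth_pair_out_edge p v :
  max_orth_pair e p -> v \notin p.1 -> v \notin p.2 -> exists2 y, y \in p.2 & e v y.
Proof.
case: p => X Y /= /andP [oXY /forallP maxXY] vX vY.
have [/exists_inP [y yY evy] | noedge_v] := boolP [exists y in Y, e v y].
  by exists y.
have oVXY : orth_pair e (v |: X, Y).
  have /orth_pairP [disj noedge] := oXY.
  apply/orth_pairP; split => [x | x y] /=; rewrite in_setU1.
    by case/predU1P => [-> // | /disj].
  case/predU1P => [-> yY | /noedge]; last exact.
  by apply: contraNN noedge_v => evy; apply/exists_inP; exists y.
move: (maxXY (v |: X, Y)); rewrite oVXY subsetUr subxx xpair_eqE /=.
by case/andP => /eqP VX _; move: vX; rewrite -VX setU11.
Qed.

Lemma max_orth_pair_inj1 p q :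
  max_orth_pair e p -> max_orth_pair e q -> p.1 = q.1 -> p = q.
Proof.
case: p q => [X Y] [X' Y'] /= mXY mXY' eqX; subst X'.
have oU : orth_pair e (X, Y :|: Y').
  have /orth_pairP [disj noedge] := max_orth_pairW mXY.
  have /orth_pairP [disj' noedge'] := max_orth_pairW mXY'.
  apply/orth_pairP; split => [x | x y] /= xX; rewrite in_setU.
    by rewrite negb_or (disj x xX) (disj' x xX).
  by case/orP; [apply: noedge | apply: noedge'].
have grow Z : max_orth_pair e (X, Z) -> Z \subset Y :|: Y' -> Z = Y :|: Y'.
  case/andP => _ /forallP /(_ (X, Y :|: Y')) + sZ.
  by rewrite /= oU subxx sZ xpair_eqE => /andP [_ /eqP].
by congr pair; rewrite (grow Y mXY (subsetUl _ _)) -(grow Y' mXY' (subsetUr _ _)).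
Qed.

Lemma Lle_anti : antisymmetric (@Lle V e).
Proof.
move=> p q /andP [pq qp]; apply/val_inj/max_orth_pair_inj1; try exact: valP.
by apply/eqP; rewrite eqEsubset; apply/andP.
Qed.

End OrthogonalPairs.

Section HochVertices.
Variable n : nat.
Implicit Types v w : Gvert n.

Definition vrow v : nat := (val v).1.
Definition vcol v : nat := (val v).2.

Lemma vert_bounds v : [/\ 0 < vrow v, vrow v <= vcol v, vrow v < 3 & vcol v <= n].
Proof.
case: v => -[i j] /= ij_ok; case/andP: (ij_ok) => i_gt0 i_le_j.
by rewrite /vrow /vcol /=; split; rewrite // -ltnS.
Qed.

Lemma vrow_cases v : vrow v = 1 \/ vrow v = 2.
Proof. by case: (vert_bounds v) => *; lia. Qed.

Lemma vert_inj v w : vrow v = vrow w -> vcol v = vcol w -> v = w.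
Proof.
case: v w => -[i j] ? [[i' j'] ?]; rewrite /vrow /vcol /= => eq_i eq_j.
by apply: val_inj; rewrite /= (ord_inj eq_i) (ord_inj eq_j).
Qed.

Lemma exists_vert i j :
  0 < i -> i <= j -> i < 3 -> j <= n -> exists v, vrow v = i /\ vcol v = j.
Proof.
move=> i_gt0 i_le_j i_lt3 j_le_n; rewrite -ltnS in j_le_n.
have ij_ok : (0 < Ordinal i_lt3) && (Ordinal i_lt3 <= Ordinal j_le_n) by apply/andP.
by exists (exist _ (Ordinal i_lt3, Ordinal j_le_n) ij_ok).
Qed.

Lemma GedgeE v w :
  Gedge v w = [&& vrow v == 2, vrow w == 1 & vcol v == vcol w]
           || [&& vrow v == 1, vrow w == 1 & vcol w < vcol v].
Proof. by []. Qed.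

End HochVertices.

Section HochCuts.
Variable n : nat.
Implicit Types (c : nat) (B : nat -> bool).

Definition Xcut c B : {set Gvert n} :=
  [set v | (vrow v == 1) && (vcol v < c) || (vrow v == 2) && B (vcol v)].
Definition Ycut c B : {set Gvert n} :=
  [set v | (vrow v == 1) && ((vcol v == c) || (c < vcol v) && ~~ B (vcol v))
        || (vrow v == 2) && ~~ B (vcol v)].

Lemma max_orth_pair_cut c B : 0 < c -> ~~ B c -> max_orth_pair (@Gedge n) (Xcut c B, Ycut c B).
Proof.
move=> c_gt0 Bc; apply: max_orth_pair_of_saturated.
  apply/orth_pairP; split => [v | v w] /=; rewrite !inE.
    by case: (B (vcol v)); lia.
  move=> vX wY; apply/negP; rewrite GedgeE => /orP [] /and3P [/eqP rv /eqP rw].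
    move=> /eqP eq_col; move: vX wY; rewrite rv rw -eq_col /= => Bv.
    by rewrite Bv andbF !orbF => /eqP eq_c; rewrite -eq_c Bv in Bc.
  by move: vX wY; rewrite rv rw /=; case: (B (vcol w)); lia.
move=> v /=; rewrite !inE => vX vY.
have [rv | rv] := vrow_cases v; rewrite rv /= in vX vY; last by rewrite vX in vY.
have c_lt_v : c < vcol v by lia.
have Bv : B (vcol v) by apply: contraR vY => nBv; rewrite c_lt_v nBv orbT.
have [_ _ _ v_le_n] := vert_bounds v.
split.
  have [x [rx cx]] := exists_vert (isT : 0 < 2) (leq_ltn_trans c_gt0 c_lt_v) isT v_le_n.
  by exists x; [rewrite inE rx cx Bv | rewrite GedgeE rx cx rv !eqxx].
have [y [ry cy]] := exists_vert (isT : 0 < 1) c_gt0 isT (ltnW (leq_trans c_lt_v v_le_n)).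
by exists y; [rewrite inE ry cy !eqxx | rewrite GedgeE ry cy rv c_lt_v orbT].
Qed.

Definition hoch_cut c B (c_gt0 : 0 < c) (Bc : ~~ B c) : Hoch n :=
  exist _ (Xcut c B, Ycut c B) (max_orth_pair_cut c_gt0 Bc).

Lemma hoch_cut_le c B c' B' c_gt0 Bc c'_gt0 B'c' :
  c <= c' -> (forall j, B j -> B' j) ->
  Hoch_le (@hoch_cut c B c_gt0 Bc) (@hoch_cut c' B' c'_gt0 B'c').
Proof.
move=> le_c sub_B; apply/subsetP => v /=; rewrite !inE.
case/orP => /andP [-> h]; first by rewrite (leq_trans h le_c).
by rewrite sub_B // orbT.
Qed.

Lemma hoch_cut_nle c B c' B' c_gt0 Bc c'_gt0 B'c' v :
  v \in Xcut c B -> v \notin Xcut c' B' ->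
  ~ Hoch_le (@hoch_cut c B c_gt0 Bc) (@hoch_cut c' B' c'_gt0 B'c').
Proof. by move=> vX vX' /subsetP /(_ v vX); apply/negP. Qed.

End HochCuts.

Section HochEmbedding.
Variable n : nat.
Implicit Types (p q : Hoch n) (v w : Gvert n).

Lemma row1_down_closed p v w :
  v \in (val p).1 -> vrow v = 1 -> vrow w = 1 -> vcol w < vcol v -> w \in (val p).1.
Proof.
move=> vX rv rw lt_wv; have mp := valP p.
have /orth_pairP [_ noedge] := max_orth_pairW mp.
apply: contraT => wX.
have edge_vw : Gedge v w by rewrite GedgeE rv rw lt_wv orbT.
have [y yY] := max_orth_pair_out_edge mp wX (contraTN (noedge v w vX) edge_vw).
rewrite GedgeE rw /= => /andP [/eqP ry lt_yw].
by move: (noedge v y vX yY); rewrite GedgeE rv ry (ltn_trans lt_yw lt_wv) orbT.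
Qed.

Definition row1_part p : {set Gvert n} := [set v in (val p).1 | vrow v == 1].

Definition hoch_coord p (k : 'I_n) : nat :=
  if k == 0 :> nat then #|row1_part p|
  else [exists v in (val p).1, (vrow v == 2) && (vcol v == k.+1)].

Lemma row1_part_card_lt p q v :
  v \in (val p).1 -> v \notin (val q).1 -> vrow v = 1 -> #|row1_part q| < #|row1_part p|.
Proof.
move=> vXp vXq rv.
pose below := [set w : Gvert n | (vrow w == 1) && (vcol w < vcol v)].
have sub_q : row1_part q \subset below.
  apply/subsetP => w; rewrite !inE => /andP [wXq /eqP rw]; rewrite rw eqxx /=.
  case: ltngtP => // [lt_vw | eq_wv].
    by rewrite (row1_down_closed wXq rw rv lt_vw) in vXq.
  by move: vXq; rewrite -(vert_inj (etrans rw (esym rv)) eq_wv) wXq.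
have sub_p : v |: below \subset row1_part p.
  apply/subsetP => w; rewrite !inE => /predU1P [-> | /andP [/eqP rw lt_wv]].
    by rewrite vXp rv.
  by rewrite (row1_down_closed vXp rv rw lt_wv) rw.
have v_below : v \notin below by rewrite inE ltnn andbF.
apply: leq_trans (subset_leq_card sub_p); rewrite cardsU1 v_below ltnS.
exact: subset_leq_card sub_q.
Qed.

Lemma Hoch_leP p q : Hoch_le p q <-> forall k, hoch_coord p k <= hoch_coord q k.
Proof.
split => [/subsetP sub_pq k | coord_le].
  rewrite /hoch_coord; case: ifP => _.
    by apply/subset_leq_card/subsetP => v; rewrite !inE => /andP [/sub_pq -> ->].
  case: (boolP [exists v in (val p).1, _]) => // /exists_inP [v vXp col_v].
  have -> // : [exists v in (val q).1, (vrow v == 2) && (vcol v == k.+1)].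
  by apply/exists_inP; exists v => //; exact: sub_pq.
apply/subsetP => v vXp; have [rv_gt0 rv_le_cv _ cv_le_n] := vert_bounds v.
have [rv | rv] := vrow_cases v.
  apply: contraT => vXq; have n_gt0 : 0 < n by lia.
  have := coord_le (Ordinal n_gt0); rewrite /hoch_coord /=.
  by rewrite leqNgt (row1_part_card_lt vXp vXq rv).
have k_lt_n : (vcol v).-1 < n by lia.
have := coord_le (Ordinal k_lt_n); rewrite /hoch_coord /=.
have -> : ((vcol v).-1 == 0) = false by lia.
have -> : (vcol v).-1.+1 = vcol v by lia.
have -> : [exists w in (val p).1, (vrow w == 2) && (vcol w == vcol v)].
  by apply/exists_inP; exists v; rewrite // rv !eqxx.
rewrite lt0b => /exists_inP [w wXq /andP [/eqP rw /eqP cw]].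
by rewrite (vert_inj (etrans rv (esym rw)) (esym cw)).
Qed.

End HochEmbedding.

Lemma ltnn_andb m b : ~~ ((m < m) && b).
Proof. by rewrite ltnn. Qed.

Section HochStandardExample.
Variable n : nat.

(* On first components: std_lo 0 is the first row and std_lo i = {(2, i+1)};
   std_hi 0 is the second row and std_hi i is every vertex but (2, i+1). *)
Definition std_lo (i : 'I_n) : Hoch n :=
  if i == 0 :> nat then hoch_cut n (B := fun _ => false) (ltn0Sn n) isT
  else hoch_cut n (B := fun j => (1 < j) && (j == i.+1)) (ltn0Sn 0) isT.

Definition std_hi (i : 'I_n) : Hoch n :=
  if i == 0 :> nat then hoch_cut n (B := fun j => 1 < j) (ltn0Sn 0) isT
  else hoch_cut n (B := fun j => (j <= n) && (j != i.+1)) (ltn0Sn n) (ltnn_andb _ _).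

Lemma std_lo_nle_hi : 0 < n -> forall i, ~ Hoch_le (std_lo i) (std_hi i).
Proof.
move=> n_gt0 i; rewrite /std_lo /std_hi; case: eqP => [i0 | i_neq0].
  have [v [rv cv]] := exists_vert (isT : 0 < 1) n_gt0 isT (leqnn n).
  by apply: (hoch_cut_nle (v := v)); rewrite !inE rv cv /=; lia.
have iS_ge2 : 2 <= i.+1 by lia.
have [v [rv cv]] := exists_vert (isT : 0 < 2) iS_ge2 isT (ltn_ord i).
by apply: (hoch_cut_nle (v := v)); rewrite !inE rv cv /=; lia.
Qed.

Lemma std_lo_le_hi i j : i != j -> Hoch_le (std_lo i) (std_hi j).
Proof.
move=> /eqP neq_ij; have {}neq_ij : i <> j :> nat by move/ord_inj.
have i_lt_n := ltn_ord i.
rewrite /std_lo /std_hi; case: eqP => i0; case: eqP => j0; try lia.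
all: by apply: hoch_cut_le => // k; lia.
Qed.

End HochStandardExample.

Theorem proposition4p3 (n : nat) : 0 < n -> order_dimension (@Hoch_le n) n.
Proof.
move=> n_gt0; split.
  exact: embeds_in_Rd_nat (@Lle_anti _ _) (@Hoch_leP n).
by move=> d; apply: standard_example_le_dim (std_lo_nle_hi n_gt0) (@std_lo_le_hi n).
Qed.
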